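(* Let $p$ be a prime number and let $L$ be a $d$-generated finite $\mathbb{Z}_p$-Lie algebra of nilpotency class $c$. Then there exist a powerful $p$-central $\mathbb{Z}_p$-Lie algebra $\widehat{L}$ whose number of generators is bounded by a function of $d$ and $c$ only, and an ideal $J$ of $L$, such that: (a) $|J|$ is bounded by a function of $p,c,d$ only; (b) $L/J$ can be embedded as a subalgebra in $\widehat{L}/\Omega_1(\widehat{L})$; (c) the index $|\widehat{L}/\Omega_1(\widehat{L}):L/J|$ is bounded by a function of $p,c,d$ only.
   Context: For a $\mathbb{Z}_p$-Lie algebra $L$: $\Omega_1(L)=\{a\in L\mid pa=0\}$; $L$ is powerful if $[L,L]\subseteq pL$; $L$ is $p$-central if $\Omega_1(L)$ is contained in the center of $L$. A $\mathbb{Z}_p$-Lie algebra is $d$-generated if it is generated as a $\mathbb{Z}_p$-Lie algebra by $d$ elements. *)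

(* Finite Z_p-Lie algebras modelled as finite abelian
   groups (finZmodType) of p-power order with an alternating, biadditive
   bracket satisfying Jacobi. *)
From HB Require Import structures.
From mathcomp Require Import all_boot all_order all_algebra.
Set Implicit Arguments.
Unset Strict Implicit.
Unset Printing Implicit Defensive.
Import GRing.Theory.
Local Open Scope ring_scope.

Record ZpLie (p : nat) : Type := ZpLieMk {
  lie_car :> finZmodType;
  lie_br : lie_car -> lie_car -> lie_car;
  lie_brDl : forall x y z : lie_car, lie_br (x + y) z = lie_br x z + lie_br y z;
  lie_brDr : forall x y z : lie_car, lie_br x (y + z) = lie_br x y + lie_br x z;
  lie_brxx : forall x : lie_car, lie_br x x = 0;
  lie_jacobi : forall x y z : lie_car,
    lie_br x (lie_br y z) + lie_br y (lie_br z x) + lie_br z (lie_br x y) = 0;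
  lie_pgroup : p.-nat #|lie_car|
}.

Section LieDefs.
Variables (p : nat) (L : ZpLie p).
Local Notation br := (@lie_br p L).

(* additive subgroups (= Z_p-submodules, L being a finite p-group) *)
Definition addsub (B : {set L}) : bool :=
  (0 \in B) && [forall x in B, forall y in B, (x - y) \in B].
Definition subalg (B : {set L}) : bool :=
  addsub B && [forall x in B, forall y in B, br x y \in B].
Definition lie_ideal (B : {set L}) : bool :=
  addsub B && [forall x in B, forall y : L, br x y \in B].

Definition zspan (S : {set L}) : {set L} :=
  \bigcap_(B : {set L} | addsub B && (S \subset B)) B.
Definition lie_gen (S : {set L}) : {set L} :=
  \bigcap_(B : {set L} | subalg B && (S \subset B)) B.

Definition d_generated (d : nat) : Prop :=
  exists S : seq L, (size S <= d)%N /\ lie_gen [set x in S] = [set: L].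

Definition brset (A B : {set L}) : {set L} := [set br x y | x in A, y in B].

(* lower central series: lcs n = gamma_{n+1}(L), lcs 0 = L *)
Fixpoint lcs (n : nat) : {set L} :=
  if n is n'.+1 then zspan (brset (lcs n') [set: L]) else [set: L].

Definition nil_class (c : nat) : Prop :=
  lcs c = [set 0] /\ forall k, (k < c)%N -> lcs k != [set 0].

Definition Omega1 : {set L} := [set x : L | x *+ p == 0].
Definition lie_center : {set L} := [set x : L | [forall y : L, br x y == 0]].

Definition powerful : Prop :=
  zspan (brset [set: L] [set: L]) \subset [set x *+ p | x in [set: L]].
Definition pcentral : Prop := Omega1 \subset lie_center.
End LieDefs.

(* homomorphisms of Z_p-Lie algebras (additive maps between finite
   p-groups are automatically Z_p-linear) *)
Definition lie_hom (p : nat) (L M : ZpLie p) (f : L -> M) : Prop :=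
  (forall x y : L, f (x + y) = f x + f y) /\
  (forall x y : L, f (lie_br x y) = lie_br (f x) (f y)).

(* Write G_i for [lcs L i], so that G_0 = L and G_c = 0.  The algebra Lhat is a formal
   version of the sum of the p^-i G_i (i < c), with the bracket multiplied by p.  Then every
   bracket is divisible by p, so Lhat is powerful, and if p u is a relation then so is
   p [u, w], so Lhat is p-central.  The map x |-> p^0 x sends L to Lhat / Omega_1(Lhat), and
   clearing denominators shows that its kernel J is killed by p^c.  As an abelian group L is
   spanned by the at most N(d, c) Lie monomials of degree < c in the generators, so Lhat is
   spanned by the c N(d, c) elements p^-i m; these bound the generators of Lhat, and since
   p^c p^-i m lies in the image of L, also the index.  Finally |J| <= |Omega_c(L)|, and
   |Omega_c(L)| |Mho^c(L)| = |L| <= |Mho^c(L)| p^(c N(d, c)). *)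

From HB Require Import structures.
From mathcomp Require Import all_boot all_order all_algebra all_fingroup all_solvable.
Set Implicit Arguments. Unset Strict Implicit. Unset Printing Implicit Defensive.
Import GRing.Theory FinRing.Theory.
Local Open Scope ring_scope.

Section AdditiveSubgroups.
Variable V : finZmodType.
Implicit Types G : {group V}.

Lemma group0r G : 0 \in G.
Proof. exact: group1. Qed.

Lemma groupD G x y : x \in G -> y \in G -> x + y \in G.
Proof. exact: groupM. Qed.

Lemma groupN G x : x \in G -> - x \in G.
Proof. exact: groupVr. Qed.

Lemma groupB G x y : x \in G -> y \in G -> x - y \in G.
Proof. by move=> xG yG; rewrite groupD ?groupN. Qed.

Lemma groupMn G x n : x \in G -> x *+ n \in G.
Proof. exact: groupX. Qed.

Lemma group_sum G I r (P : pred I) (F : I -> V) :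
  (forall i, P i -> F i \in G) -> \sum_(i <- r | P i) F i \in G.
Proof.
by move=> FG; apply: (big_ind (fun x => x \in G)) => //; [exact: group0r | exact: groupD].
Qed.

Lemma pnat_card_zmod (p n : nat) : p.-nat n -> (forall x : V, x *+ n = 0) -> p.-nat #|V|.
Proof.
move=> pn Vn; suff : (p.-group [set: V])%g by rewrite /pgroup cardsT.
by rewrite -pnat_exponent; apply: pnat_dvd pn; apply/exponentP => x _; apply: Vn.
Qed.

End AdditiveSubgroups.

Lemma additive_group_set (U V : finZmodType) (f : U -> V) (H : {group U}) :
  {morph f : x y / x - y} -> group_set (f @: H).
Proof.
move=> fB; have f0 : f 0 = 0 by rewrite -(subrr 0) fB subrr.
apply/group_setP; split; first by apply/imsetP; exists 0; rewrite ?group0r ?f0.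
move=> fx fy /imsetP[x xH ->] /imsetP[y yH ->]; apply/imsetP; exists (x - (0 - y)).
  by rewrite !groupB ?group0r.
by rewrite !fB f0 sub0r opprK.
Qed.

Lemma preimage_group_set (U V : finZmodType) (f : U -> V) (H : {group U}) (G : {group V}) :
  {in H &, {morph f : x y / x - y}} -> group_set [set x in H | f x \in G].
Proof.
move=> fB; have f0 : f 0 = 0 by rewrite -(subrr 0) fB ?subrr ?group0r.
apply/group_setP; split => [|x y]; first by rewrite inE group0r f0 group0r.
rewrite !inE => /andP[xH xG] /andP[yH yG].
have yH' : 0 - y \in H := groupB (group0r H) yH.
have -> : (x * y)%g = x - (0 - y) by rewrite sub0r opprK.
apply/andP; split; first exact: groupB xH yH'.
by rewrite !fB ?group0r // f0; apply: groupB xG (groupB (group0r G) yG).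
Qed.

Lemma additive_gen_in (U V : finZmodType) (f : U -> V) (H : {group U}) (A : {set U})
    (G : {group V}) :
  {in H &, {morph f : x y / x - y}} -> A \subset H -> {in A, forall x, f x \in G} ->
  {in <<A>>%g, forall x, f x \in G}.
Proof.
move=> fB sAH fAG; have sAG : <<A>>%g \subset Group (preimage_group_set G fB).
  by rewrite gen_subG; apply/subsetP => x xA; rewrite inE fAG ?(subsetP sAH).
by move=> x /(subsetP sAG); rewrite inE => /andP[].
Qed.

Lemma biadditive_gen_in (U V : finZmodType) (br : U -> U -> V) (A B : {set U}) (G : {group V}) :
  (forall x, {morph br x : y z / y - z}) -> (forall y, {morph br^~ y : x z / x - z}) ->
  (forall a b, a \in A -> b \in B -> br a b \in G) ->
  forall x y, x \in <<A>>%g -> y \in <<B>>%g -> br x y \in G.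
Proof.
move=> brBr brBl brAB x y xA yB.
have brAG a : a \in A -> br a y \in G.
  move=> aA; apply: (@additive_gen_in _ _ (br a) [set: U]%G B) yB => [u v _ _||b bB].
  - exact: brBr.
  - exact: subsetT.
  exact: brAB.
apply: (@additive_gen_in _ _ (br^~ y) [set: U]%G A) xA => [u v _ _||//].
- exact: brBl.
exact: subsetT.
Qed.

Record lie_bracket (V : zmodType) (br : V -> V -> V) : Prop := LieBracket {
  brDl : forall x y z, br (x + y) z = br x z + br y z;
  brDr : forall x y z, br x (y + z) = br x y + br x z;
  brxx : forall x, br x x = 0;
  br_jacobi : forall x y z, br x (br y z) + br y (br z x) + br z (br x y) = 0
}.

Section LieBracketTheory.
Variables (V : zmodType) (br : V -> V -> V).
Hypothesis hbr : lie_bracket br.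

Lemma br0l x : br 0 x = 0.
Proof. by apply: (addrI (br 0 x)); rewrite -(brDl hbr) !addr0. Qed.

Lemma br0r x : br x 0 = 0.
Proof. by apply: (addrI (br x 0)); rewrite -(brDr hbr) !addr0. Qed.

Lemma brNl x y : br (- x) y = - br x y.
Proof. by apply: (addrI (br x y)); rewrite -(brDl hbr) !subrr br0l. Qed.

Lemma brNr x y : br x (- y) = - br x y.
Proof. by apply: (addrI (br x y)); rewrite -(brDr hbr) !subrr br0r. Qed.

Lemma brBl x y z : br (x - y) z = br x z - br y z.
Proof. by rewrite (brDl hbr) brNl. Qed.

Lemma brBr x y z : br x (y - z) = br x y - br x z.
Proof. by rewrite (brDr hbr) brNr. Qed.

Lemma brC x y : br y x = - br x y.
Proof.
apply/eqP; rewrite -addr_eq0 addrC.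
by have := brxx hbr (x + y); rewrite (brDl hbr) !(brDr hbr) !(brxx hbr) add0r addr0 => ->.
Qed.

Lemma brMnl x y n : br (x *+ n) y = br x y *+ n.
Proof. by elim: n => [|n IH]; rewrite ?mulr0n ?br0l // !mulrS (brDl hbr) IH. Qed.

Lemma brMnr x y n : br x (y *+ n) = br x y *+ n.
Proof. by elim: n => [|n IH]; rewrite ?mulr0n ?br0r // !mulrS (brDr hbr) IH. Qed.

Lemma lie_bracketMn n : lie_bracket (fun x y => br x y *+ n).
Proof.
split=> [x y z|x y z|x|x y z] /=; first by rewrite (brDl hbr) mulrnDl.
- by rewrite (brDr hbr) mulrnDl.
- by rewrite (brxx hbr) mul0rn.
by rewrite !brMnr -!mulrnDl (br_jacobi hbr) !mul0rn.
Qed.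

End LieBracketTheory.

Section AdjoinCard.
Variable V : finZmodType.

Lemma exists_adjoin_group (B : {group V}) (x : V) m : (0 < m)%N -> x *+ m \in B ->
  exists2 Bx : {group V}, B :|: [set x] \subset Bx & (#|Bx| <= #|B| * m)%N.
Proof.
move=> m_gt0 xmB; pose f (bk : V * 'I_m) := bk.1 + x *+ bk.2.
have fB b (k : nat) : b \in B -> b + x *+ k \in f @: setX B [set: 'I_m].
  move=> bB; apply/imsetP; exists (b + (x *+ m) *+ (k %/ m), Ordinal (ltn_pmod k m_gt0)).
    by rewrite in_setX in_setT andbT; apply: groupD => //; exact: groupMn.
  by rewrite /f /= -addrA -mulrnA -mulrnDr mulnC -divn_eq.
have gBx : group_set (f @: setX B [set: 'I_m]).
  apply/group_setP; split=> [|y z /imsetP[[b k] /setXP[bB _] ->] /imsetP[[b' k'] /setXP[b'B _] ->]].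
    by move: (fB 0 0%N (group0r B)); rewrite mulr0n addr0.
  by rewrite zmodMgE /f /= addrACA -mulrnDr fB ?groupD.
exists (Group gBx); last by rewrite (leq_trans (leq_imset_card _ _)) // cardsX cardsT card_ord.
apply/subsetP => y; rewrite !inE => /orP[yB | /eqP ->].
  by move: (fB y 0%N yB); rewrite mulr0n addr0.
by move: (fB 0 1%N (group0r B)); rewrite mulr1n add0r.
Qed.

Lemma leq_card_gen_adjoin (B : {group V}) (s : seq V) m : (0 < m)%N ->
  {in s, forall x, x *+ m \in B} -> (#|<<B :|: [set x in s]>>%g| <= #|B| * m ^ size s)%N.
Proof.
elim: s B => [|x s IH] B m_gt0 sB.
  by rewrite muln1 (_ : _ :|: _ = B) ?genGid //; apply/setP => y; rewrite !inE orbF.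
have [Bx sBx cardBx] := exists_adjoin_group m_gt0 (sB x (mem_head x s)).
have sBxs : B :|: [set y in x :: s] \subset Bx :|: [set y in s].
  apply/subsetP => y; rewrite !inE => /or3P[yB | /eqP-> | ys]; rewrite ?ys ?orbT //;
    by rewrite (subsetP sBx) ?inE ?yB ?eqxx ?orbT.
have sBs : {in s, forall y, y *+ m \in Bx}.
  by move=> y ys; rewrite (subsetP sBx) // inE sB // inE ys orbT.
apply: leq_trans (subset_leq_card (genS sBxs)) (leq_trans (IH Bx m_gt0 sBs) _).
by rewrite expnS mulnA leq_mul2r cardBx orbT.
Qed.

End AdjoinCard.

Lemma lie_bracket_br (p : nat) (L : ZpLie p) : lie_bracket (@lie_br p L).
Proof. by split; [exact: lie_brDl | exact: lie_brDr | exact: lie_brxx | exact: lie_jacobi]. Qed.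

Section LieAlgebra.
Variables (p : nat) (L : ZpLie p).
Local Notation br := (@lie_br p L).
Let hL := lie_bracket_br L.

Lemma addsub_group_set (B : {set L}) : addsub B = group_set B.
Proof.
apply/idP/idP => [/andP[B0 /forall_inP BB] | gB].
  apply/group_setP; split=> // x y xB yB.
  have -> : (x * y)%g = x - (0 - y) by rewrite sub0r opprK.
  by have BB' := fun a b (aB : a \in B) => forall_inP (BB a aB) b; rewrite !BB'.
apply/andP; split; first exact: (group0r (Group gB)).
by apply/forall_inP => x xB; apply/forall_inP => y yB; exact: (groupB (G := Group gB)).
Qed.

Lemma zspan_gen (S : {set L}) : zspan S = <<S>>%g.
Proof.
apply/eqP; rewrite eqEsubset; apply/andP; split.
  by apply: bigcap_inf; rewrite addsub_group_set groupP subset_gen.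
apply/subsetP => x Sx; apply/bigcapP => B /andP[]; rewrite addsub_group_set => gB sSB.
by move: x Sx; apply/subsetP; rewrite (gen_subG S (Group gB)).
Qed.

Lemma zspan_min (S B : {set L}) : group_set B -> S \subset B -> zspan S \subset B.
Proof. by move=> gB sSB; apply: bigcap_inf; rewrite addsub_group_set gB. Qed.

Lemma lie_gen_full (S : {set L}) : <<S>>%g = [set: L] -> lie_gen S = [set: L].
Proof.
move=> genS; apply/eqP; rewrite eqEsubset subsetT /= -genS.
apply/bigcapsP => B /andP[/andP[]]; rewrite addsub_group_set => gB _ sSB.
by rewrite (gen_subG S (Group gB)).
Qed.

Lemma lcs_group_set n : group_set (lcs L n).
Proof. by case: n => [|n] /=; rewrite ?zspan_gen groupP. Qed.
Canonical lcs_group n := Group (lcs_group_set n).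

Lemma lcs_br n x y : x \in lcs L n -> br x y \in lcs L n.+1.
Proof. by move=> xn; rewrite /= zspan_gen mem_gen ?imset2_f ?inE. Qed.

Lemma lcs_subS n : lcs L n.+1 \subset lcs L n.
Proof.
elim: n => [|n IH]; first exact: subsetT.
rewrite [lcs L n.+2]/= zspan_gen gen_subG.
by apply/subsetP => _ /imset2P[x y xn _ ->]; rewrite lcs_br ?(subsetP IH).
Qed.

Lemma lcs_sub m n : (m <= n)%N -> lcs L n \subset lcs L m.
Proof.
move/subnK <-; elim: (n - m)%N => [|k IH] //.
by rewrite addSn (subset_trans (lcs_subS _)).
Qed.

Lemma br_lcs i j x y : x \in lcs L i -> y \in lcs L j -> br x y \in lcs L (i + j).+1.
Proof.
elim: j i x y => [|j IH] i x y xi yj; first by rewrite addn0 lcs_br.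
move: y yj; rewrite [lcs L j.+1]/= zspan_gen.
apply: (additive_gen_in (H := [set: L]%G)) => [y z _ _||_ /imset2P[a b aj _ ->]].
- exact: brBr.
- exact: subsetT.
have -> : br x (br a b) = - br a (br b x) - br b (br x a).
  by apply/eqP; rewrite -opprD -addr_eq0 addrA (br_jacobi hL).
rewrite !addnS groupB ?groupN //.
  by rewrite (brC hL) groupN // -addSn IH // (brC hL) groupN // lcs_br.
by rewrite (brC hL) groupN // lcs_br // IH.
Qed.

Lemma lie_hom_ker_ideal (M : ZpLie p) (f : L -> M) :
  lie_hom f -> lie_ideal [set x | f x == 0].
Proof.
case=> fD fbr; have f0 : f 0 = 0 by apply: (addIr (f 0)); rewrite -fD !add0r.
have fN x : f (- x) = - f x by apply: (addIr (f x)); rewrite -fD !addNr.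
apply/andP; split.
  rewrite addsub_group_set; apply/group_setP; split=> [|x y]; rewrite !inE ?f0 //.
  by move=> /eqP fx /eqP fy; rewrite zmodMgE fD fx fy addr0.
apply/forall_inP => x; rewrite inE => /eqP fx; apply/forallP => y.
by rewrite inE fbr fx (br0l (lie_bracket_br M)).
Qed.

End LieAlgebra.

Fixpoint monomial_count (d n : nat) : nat :=
  if n is n'.+1 then (monomial_count d n' + monomial_count d n' ^ 2)%N else d.

Section LieMonomials.
Variables (p : nat) (L : ZpLie p) (S : seq L).
Local Notation br := (@lie_br p L).

(* A monomial is paired with its degree, [0] for the generators in [S]. *)
Fixpoint lie_monomials (n : nat) : seq (L * nat) :=
  if n is n'.+1 then
    lie_monomials n' ++
      [seq (br a.1 b.1, (a.2 + b.2).+1) | a <- lie_monomials n', b <- lie_monomials n']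
  else [seq (x, 0%N) | x <- S].

Lemma size_lie_monomials d n :
  (size S <= d)%N -> (size (lie_monomials n) <= monomial_count d n)%N.
Proof.
move=> Sd; elim: n => [|n IH] /=; first by rewrite size_map.
by rewrite size_cat size_allpairs leq_add // leq_mul.
Qed.

Lemma lie_monomials_lcs n m : m \in lie_monomials n -> m.1 \in lcs L m.2.
Proof.
elim: n m => [|n IH] m /=; first by case/mapP => x _ ->; rewrite inE.
rewrite mem_cat => /orP[/IH // | /allpairsP[[a b] [aM bM ->]]] /=.
exact: br_lcs (IH _ aM) (IH _ bM).
Qed.

Lemma lie_monomials_sub m n : (m <= n)%N -> {subset lie_monomials m <= lie_monomials n}.
Proof.
move/subnK <-; elim: (n - m)%N => [|k IH] x //.
by rewrite addSn /= mem_cat => /IH ->.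
Qed.

Lemma lie_monomials_br n a b : a \in lie_monomials a.2 -> b \in lie_monomials b.2 ->
  ((a.2 + b.2).+1 <= n)%N -> (br a.1 b.1, (a.2 + b.2).+1) \in lie_monomials n.
Proof.
move=> aM bM abn; pose k := maxn a.2 b.2.
have le_kn : (k.+1 <= n)%N by rewrite (leq_trans _ abn) // ltnS geq_max leq_addr leq_addl.
apply: (lie_monomials_sub le_kn); rewrite /= mem_cat; apply/orP; right.
by apply/allpairsP; exists (a, b); rewrite !(lie_monomials_sub _ aM, lie_monomials_sub _ bM)
  ?leq_maxl ?leq_maxr.
Qed.

Lemma lie_monomials_deg n m : m \in lie_monomials n -> m \in lie_monomials m.2.
Proof.
elim: n m => [|n IH] m /=; first by case/mapP => x xS ->; rewrite /= map_f.
rewrite mem_cat => /orP[/IH // | /allpairsP[[a b] [aM bM ->]]].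
by apply: lie_monomials_br; [exact: IH aM | exact: IH bM | ].
Qed.

Definition monomials_from (n k : nat) : {set L} :=
  [set x in [seq m.1 | m <- lie_monomials n & (k <= m.2)%N]].

Lemma monomials_fromP n k x :
  reflect (exists2 m, m \in lie_monomials n & x = m.1 /\ (k <= m.2)%N) (x \in monomials_from n k).
Proof.
rewrite inE; apply: (iffP mapP) => [[m] | [m mM [-> km]]]; last by exists m; rewrite ?mem_filter ?km.
by rewrite mem_filter => /andP[km mM] ->; exists m.
Qed.

Lemma monomials_from_sub n k l : (k <= l)%N -> monomials_from n l \subset monomials_from n k.
Proof.
move=> le_kl; apply/subsetP => x /monomials_fromP[m mM [-> lm]].
by apply/monomials_fromP; exists m; rewrite ?(leq_trans le_kl lm).
Qed.

Lemma monomials_from_lcs n k : monomials_from n k \subset lcs L k.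
Proof.
apply/subsetP => x /monomials_fromP[m mM [-> km]].
exact: subsetP (lcs_sub L km) _ (lie_monomials_lcs mM).
Qed.

Lemma card_monomials_from n k : (#|monomials_from n k| <= size (lie_monomials n))%N.
Proof.
by rewrite cardsE (leq_trans (card_size _)) // size_map size_filter count_size.
Qed.

Variable c : nat.
Hypothesis lcs_c : lcs L c = [set 0].

Lemma br_monomials_from k a b : a \in monomials_from c k -> b \in monomials_from c 0 ->
  br a b \in <<monomials_from c k.+1>>%g.
Proof.
move=> /monomials_fromP[x xM [-> kx]] /monomials_fromP[y yM [-> _]].
have [lt_c | le_c] := ltnP (x.2 + y.2).+1 c.
  apply: mem_gen; apply/monomials_fromP; exists (br x.1 y.1, (x.2 + y.2).+1).
    exact: lie_monomials_br (lie_monomials_deg xM) (lie_monomials_deg yM) (ltnW lt_c).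
  by split=> //; rewrite ltnS (leq_trans kx) ?leq_addr.
have := br_lcs (lie_monomials_lcs xM) (lie_monomials_lcs yM).
by move/(subsetP (lcs_sub L le_c)); rewrite lcs_c inE => /eqP ->; exact: group0r.
Qed.

Hypothesis S_gen : lie_gen [set x in S] = [set: L].

Lemma span_monomials : <<monomials_from c 0>>%g = [set: L].
Proof.
apply/eqP; rewrite eqEsubset subsetT -S_gen; apply: bigcap_inf; apply/andP; split.
  rewrite /subalg addsub_group_set groupP; apply/forall_inP => x xM.
  apply/forall_inP => y yM; apply: (biadditive_gen_in _ _ _ xM yM) => [u v w|v u w|a b aM bM].
  - exact: (brBr (lie_bracket_br L) u v w).
  - exact: (brBl (lie_bracket_br L) u w v).
  exact: subsetP (genS (monomials_from_sub c (leq0n 1))) _ (br_monomials_from aM bM).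
apply/subsetP => x; rewrite inE => xS; apply/mem_gen/monomials_fromP.
by exists (x, 0%N); rewrite ?(lie_monomials_sub (leq0n c)) //= map_f.
Qed.

Lemma lcs_sub_monomials k : lcs L k \subset <<monomials_from c k>>%g.
Proof.
elim: k => [|k IH]; first by rewrite span_monomials subsetT.
rewrite [lcs L k.+1]/= zspan_gen gen_subG; apply/subsetP => _ /imset2P[a b ak _ ->].
have bM : b \in <<monomials_from c 0>>%g by rewrite span_monomials inE.
apply: (biadditive_gen_in _ _ _ (subsetP IH a ak) bM) => [u v w|v u w|].
- exact: (brBr (lie_bracket_br L) u v w).
- exact: (brBl (lie_bracket_br L) u w v).
exact: br_monomials_from.
Qed.

End LieMonomials.

Section Subquotient.
Variables (V : finZmodType) (W R : {group V}).

(* Elements of [W / (W :&: R)] are represented by canonical representatives in [W]. *)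
Definition sq_repr (v : V) : V := odflt v [pick w in W | w - v \in R].

Record subquot := Subquot { sq_val : V; _ : (sq_val \in W) && (sq_repr sq_val == sq_val) }.
HB.instance Definition _ := [isSub for sq_val].
HB.instance Definition _ := [Finite of subquot by <:].

Lemma sq_reprP v : v \in W -> sq_repr v \in W /\ sq_repr v - v \in R.
Proof.
move=> vW; rewrite /sq_repr; case: pickP => [w /andP[] // | /(_ v)].
by rewrite vW subrr group0r.
Qed.

Lemma sq_repr_eq u v : v \in W -> u - v \in R -> sq_repr u = sq_repr v.
Proof.
move=> vW uvR; rewrite /sq_repr (eq_pick (_ : _ =1 [pred w in W | w - v \in R])) => [|w /=].
  by case: pickP => //= /(_ v); rewrite /= vW subrr group0r.
congr (_ && _); apply/idP/idP => [wuR | wvR].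
  by have := groupD wuR uvR; rewrite addrA subrK.
by have := groupB wvR uvR; rewrite opprB addrA subrK.
Qed.

Lemma sq_repr_keep v : v \in W -> (sq_repr v \in W) && (sq_repr (sq_repr v) == sq_repr v).
Proof.
by move=> vW; have [rW rvR] := sq_reprP vW; rewrite rW (sq_repr_eq vW rvR) eqxx.
Qed.

Definition sqclass (v : V) : subquot :=
  insubd (Subquot (sq_repr_keep (group0r W))) (sq_repr v).

Lemma val_sqclass v : v \in W -> sq_val (sqclass v) = sq_repr v.
Proof. by move=> vW; rewrite /sqclass val_insubd sq_repr_keep. Qed.

Lemma sq_valW a : sq_val a \in W.
Proof. by case/andP: (valP a). Qed.

Lemma sqclassK a : sqclass (sq_val a) = a.
Proof. by apply: val_inj; rewrite /= val_sqclass ?sq_valW //; case/andP: (valP a) => _ /eqP. Qed.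

Lemma sqclass_surj a : exists2 u, u \in W & a = sqclass u.
Proof. by exists (sq_val a); rewrite ?sq_valW ?sqclassK. Qed.

Lemma sqclass_eqE u v : u \in W -> v \in W -> (sqclass u == sqclass v) = (u - v \in R).
Proof.
move=> uW vW; apply/eqP/idP => [/(congr1 sq_val) | uvR]; last first.
  by apply: val_inj; rewrite /= !val_sqclass // (sq_repr_eq vW uvR).
rewrite !val_sqclass // => eq_r.
have [_ ruR] := sq_reprP uW; have [_ rvR] := sq_reprP vW.
by move: (groupB rvR ruR); rewrite eq_r opprB addrC addrA subrK.
Qed.

Lemma sq_val_class u : u \in W -> sq_val (sqclass u) - u \in R.
Proof. by move=> uW; rewrite val_sqclass //; case: (sq_reprP uW). Qed.

Definition sq_add (a b : subquot) := sqclass (sq_val a + sq_val b).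
Definition sq_opp (a : subquot) := sqclass (- sq_val a).

Lemma sq_add_class u v : u \in W -> v \in W -> sq_add (sqclass u) (sqclass v) = sqclass (u + v).
Proof.
move=> uW vW; apply/eqP.
rewrite /sq_add sqclass_eqE ?(groupD uW vW) ?(groupD (sq_valW _) (sq_valW _)) //.
by rewrite opprD addrACA groupD ?sq_val_class.
Qed.

Lemma sq_opp_class u : u \in W -> sq_opp (sqclass u) = sqclass (- u).
Proof.
move=> uW; apply/eqP; rewrite /sq_opp sqclass_eqE ?groupN ?sq_valW //.
by rewrite -opprD groupN ?sq_val_class.
Qed.

Lemma sq_addA : associative sq_add.
Proof.
move=> a b c; have [u uW ->] := sqclass_surj a; have [v vW ->] := sqclass_surj b.
by have [w wW ->] := sqclass_surj c; rewrite !sq_add_class ?groupD ?addrA.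
Qed.

Lemma sq_addC : commutative sq_add.
Proof. by move=> a b; rewrite /sq_add addrC. Qed.

Lemma sq_add0 : left_id (sqclass 0) sq_add.
Proof. by move=> a; have [u uW ->] := sqclass_surj a; rewrite sq_add_class ?group0r ?add0r. Qed.

Lemma sq_addN : left_inverse (sqclass 0) sq_opp sq_add.
Proof.
move=> a; have [u uW ->] := sqclass_surj a.
by rewrite sq_opp_class // sq_add_class ?groupN ?addNr.
Qed.

HB.instance Definition _ := GRing.isZmodule.Build subquot sq_addA sq_addC sq_add0 sq_addN.

Lemma sqclassD u v : u \in W -> v \in W -> sqclass (u + v) = sqclass u + sqclass v.
Proof. by move=> uW vW; rewrite -sq_add_class. Qed.

Lemma sqclass0 : sqclass 0 = 0.
Proof. by []. Qed.

Lemma sqclassN u : u \in W -> sqclass (- u) = - sqclass u.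
Proof. by move=> uW; rewrite -sq_opp_class. Qed.

Lemma sqclassB u v : u \in W -> v \in W -> sqclass (u - v) = sqclass u - sqclass v.
Proof. by move=> uW vW; rewrite sqclassD ?groupN ?sqclassN. Qed.

Lemma sqclassMn u n : u \in W -> sqclass (u *+ n) = sqclass u *+ n.
Proof.
move=> uW; elim: n => [|n IH]; first by rewrite !mulr0n.
by rewrite !mulrS sqclassD ?groupMn ?IH.
Qed.

Lemma sqclass_sum I r (P : pred I) (F : I -> V) : (forall i, F i \in W) ->
  sqclass (\sum_(i <- r | P i) F i) = \sum_(i <- r | P i) sqclass (F i).
Proof.
move=> FW; elim: r => [|i r IH]; first by rewrite !big_nil.
by rewrite !big_cons; case: (P i); rewrite // sqclassD ?IH ?group_sum.
Qed.

Lemma sqclass_eq0 u : u \in W -> (sqclass u == 0) = (u \in R).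
Proof. by move=> uW; rewrite -sqclass0 sqclass_eqE ?group0r ?subr0. Qed.

Lemma pnat_card_subquot (p : nat) : p.-nat #|V| -> p.-nat #|{: subquot}|.
Proof.
move=> pV; apply: (pnat_card_zmod pV) => a; have [u uW ->] := sqclass_surj a.
by rewrite -sqclassMn // -zmodXgE -cardsT expg_cardG ?inE.
Qed.

Variable br : V -> V -> V.
Hypotheses (hbr : lie_bracket br) (brW : {in W &, forall u v, br u v \in W})
  (brR : forall r w, r \in R -> w \in W -> br r w \in R).

Definition sq_br (a b : subquot) : subquot := sqclass (br (sq_val a) (sq_val b)).

Lemma sq_br_class u v : u \in W -> v \in W -> sq_br (sqclass u) (sqclass v) = sqclass (br u v).
Proof.
move=> uW vW; apply/eqP; rewrite sqclass_eqE ?brW ?sq_valW //.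
set u' := sq_val _; set v' := sq_val _.
have -> : br u' v' - br u v = br (u' - u) v' + br u (v' - v).
  by rewrite (brBl hbr) (brBr hbr) addrA subrK.
rewrite groupD //; first by rewrite brR ?sq_val_class ?sq_valW.
by rewrite (brC hbr) groupN // brR ?sq_val_class.
Qed.

Lemma sq_lie_bracket : lie_bracket sq_br.
Proof.
split=> [a b c|a b c|a|a b c]; have [u uW ->] := sqclass_surj a.
- have [v vW ->] := sqclass_surj b; have [w wW ->] := sqclass_surj c.
  by rewrite -sqclassD // !sq_br_class ?groupD // (brDl hbr) sqclassD ?brW.
- have [v vW ->] := sqclass_surj b; have [w wW ->] := sqclass_surj c.
  by rewrite -sqclassD // !sq_br_class ?groupD // (brDr hbr) sqclassD ?brW.
- by rewrite sq_br_class // (brxx hbr).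
have [v vW ->] := sqclass_surj b; have [w wW ->] := sqclass_surj c.
have brbrW x y z : x \in W -> y \in W -> z \in W -> br x (br y z) \in W.
  by move=> xW yW zW; rewrite !brW.
by rewrite !sq_br_class ?brW // -sqclass0 -(br_jacobi hbr u v w) !sqclassD ?groupD ?brbrW.
Qed.

Definition subquot_lie (p : nat) (pV : p.-nat #|V|) : ZpLie p :=
  ZpLieMk (brDl sq_lie_bracket) (brDr sq_lie_bracket) (brxx sq_lie_bracket)
    (br_jacobi sq_lie_bracket) (pnat_card_subquot pV).

End Subquotient.

Lemma sum_ord_eq (M : zmodType) (c n : nat) (F : nat -> M) :
  \sum_(i < c) (if (i : nat) == n then F i else 0) = if (n < c)%N then F n else 0.
Proof. by rewrite -big_mkcond big_ord1_eq. Qed.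

Lemma sum_rot3 (M : zmodType) (I J K : finType) (F : I -> J -> K -> M) :
  \sum_i \sum_j \sum_k F i j k = \sum_k \sum_i \sum_j F i j k.
Proof.
transitivity (\sum_i \sum_k \sum_j F i j k); last exact: exchange_big.
by apply: eq_bigr => i _; rewrite exchange_big.
Qed.

Section Graded.
Variables (p : nat) (L : ZpLie p) (c : nat).
Local Notation br := (@lie_br p L).
Let hL := lie_bracket_br L.

Definition graded := {ffun 'I_c -> L}.
HB.instance Definition _ := GRing.Zmodule.on graded.
HB.instance Definition _ := Finite.on graded.

Definition homog (n : nat) (x : L) : graded := [ffun k : 'I_c => if (k : nat) == n then x else 0].

Lemma homogE n x k : homog n x k = if (k : nat) == n then x else 0.
Proof. by rewrite ffunE. Qed.

Lemma homogB n : {morph homog n : x y / x - y}.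
Proof. by move=> x y; apply/ffunP => k; rewrite !ffunE; case: eqP; rewrite ?subr0. Qed.

Lemma homog0 n : homog n 0 = 0.
Proof. by rewrite -(subrr 0) homogB subrr. Qed.

Lemma homogN n x : homog n (- x) = - homog n x.
Proof. by rewrite -sub0r homogB homog0 sub0r. Qed.

Lemma homogD n x y : homog n (x + y) = homog n x + homog n y.
Proof. by rewrite -{1}[y]opprK homogB homogN opprK. Qed.

Lemma homogMn n x m : homog n (x *+ m) = homog n x *+ m.
Proof. by apply/ffunP => k; rewrite ffunMnE !ffunE; case: eqP; rewrite ?mul0rn. Qed.

Lemma homog_out n x : (c <= n)%N -> homog n x = 0.
Proof.
move=> le_cn; apply/ffunP => k; rewrite !ffunE; case: eqP => // eq_kn.
by move: (ltn_ord k); rewrite eq_kn ltnNge le_cn.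
Qed.

Lemma graded_decomp (u : graded) : u = \sum_(i < c) homog i (u i).
Proof.
apply/ffunP => k; rewrite sum_ffunE.
have := @sum_ord_eq _ c k (fun=> u k); rewrite ltn_ord => <-.
apply: eq_bigr => i _; rewrite homogE; case: eqP => [/val_inj -> | /eqP]; first by rewrite eqxx.
by rewrite eq_sym => /negPf ->.
Qed.

Definition grbr (u v : graded) : graded :=
  \sum_(i < c) \sum_(j < c) homog (i + j).+1 (br (u i) (v j)).

Lemma grbrDl u v w : grbr (u + v) w = grbr u w + grbr v w.
Proof.
rewrite /grbr -big_split; apply: eq_bigr => i _; rewrite -big_split.
by apply: eq_bigr => j _; rewrite ffunE lie_brDl homogD.
Qed.

Lemma grbrDr u v w : grbr u (v + w) = grbr u v + grbr u w.
Proof.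
rewrite /grbr -big_split; apply: eq_bigr => i _; rewrite -big_split.
by apply: eq_bigr => j _; rewrite ffunE lie_brDr homogD.
Qed.

Lemma grbr0l w : grbr 0 w = 0.
Proof. by apply: (addrI (grbr 0 w)); rewrite -grbrDl !addr0. Qed.

Lemma grbr0r u : grbr u 0 = 0.
Proof. by apply: (addrI (grbr u 0)); rewrite -grbrDr !addr0. Qed.

Lemma grbr_homogl n x w : grbr (homog n x) w = \sum_(j < c) homog (n + j).+1 (br x (w j)).
Proof.
have [lt_nc | le_cn] := ltnP n c; last first.
  by rewrite homog_out // grbr0l big1 // => j _; rewrite homog_out // leqW // (leq_trans le_cn) ?leq_addr.
have := @sum_ord_eq _ c n (fun i => \sum_(j < c) homog (i + j).+1 (br x (w j))).
rewrite lt_nc /= => <-; apply: eq_bigr => i _; rewrite homogE.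
by case: eqP => // _; apply: big1 => j _; rewrite (br0l hL) homog0.
Qed.

Lemma grbr_anti u v : grbr v u = - grbr u v.
Proof.
rewrite /grbr exchange_big -sumrN; apply: eq_bigr => i _; rewrite -sumrN.
by apply: eq_bigr => j _; rewrite (brC hL) homogN addnC.
Qed.

Lemma grbr_homog i j x y : grbr (homog i x) (homog j y) = homog (i + j).+1 (br x y).
Proof.
have [lt_jc | le_cj] := ltnP j c; last first.
  by rewrite (homog_out _ le_cj) grbr0r homog_out // leqW // (leq_trans le_cj) ?leq_addl.
rewrite grbr_homogl; have := @sum_ord_eq _ c j (fun k => homog (i + k).+1 (br x y)).
rewrite lt_jc /= => <-; apply: eq_bigr => k _; rewrite homogE.
by case: eqP => // _; rewrite (br0r hL) homog0.
Qed.

Lemma grbrxx u : grbr u u = 0.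
Proof.
rewrite (graded_decomp u); elim: (index_enum _) => [|i r IH]; first by rewrite big_nil grbr0l.
rewrite big_cons grbrDl !grbrDr IH grbr_homog (brxx hL) homog0 add0r addr0.
by rewrite [grbr _ (homog _ _)]grbr_anti subrr.
Qed.

Lemma grbr_homogr u n z : grbr u (homog n z) = \sum_(i < c) homog (i + n).+1 (br (u i) z).
Proof.
rewrite grbr_anti grbr_homogl -sumrN; apply: eq_bigr => i _.
by rewrite (brC hL) homogN opprK addnC.
Qed.

Lemma grbr_sumr u I r (P : pred I) (F : I -> graded) :
  grbr u (\sum_(i <- r | P i) F i) = \sum_(i <- r | P i) grbr u (F i).
Proof. by apply: big_morph => [v w|]; rewrite ?grbrDr ?grbr0r. Qed.

Lemma grbr_grbr u v w : grbr u (grbr v w) =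
  \sum_(i < c) \sum_(j < c) \sum_(l < c) homog (i + j + l).+2 (br (u i) (br (v j) (w l))).
Proof.
rewrite [grbr v w]/grbr grbr_sumr.
transitivity (\sum_(j < c) \sum_(l < c) \sum_(i < c)
  homog (i + j + l).+2 (br (u i) (br (v j) (w l)))); last exact: sum_rot3.
apply: eq_bigr => j _; rewrite grbr_sumr; apply: eq_bigr => l _; rewrite grbr_homogr.
by apply: eq_bigr => i _; rewrite addnS addnA.
Qed.

Lemma grbr_jacobi u v w : grbr u (grbr v w) + grbr v (grbr w u) + grbr w (grbr u v) = 0.
Proof.
rewrite !grbr_grbr [X in _ + X + _]sum_rot3 [X in _ + _ + X]sum_rot3 [X in _ + _ + X]sum_rot3.
rewrite -!big_split big1 // => i _; rewrite -!big_split big1 // => j _.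
rewrite -!big_split big1 // => l _ /=.
have -> : (j + l + i = i + j + l)%N by rewrite addnC addnA.
have -> : (l + i + j = i + j + l)%N by rewrite [(l + i)%N]addnC addnAC.
by rewrite -!homogD (br_jacobi hL) homog0.
Qed.

Lemma grbr_lie_bracket : lie_bracket grbr.
Proof. by split; [exact: grbrDl | exact: grbrDr | exact: grbrxx | exact: grbr_jacobi]. Qed.

End Graded.

Section LieHat.
Variables (p : nat) (L : ZpLie p) (c : nat).
Local Notation br := (@lie_br p L).
Local Notation graded := (graded L c).
Local Notation homog := (@homog p L c).
Local Notation grbr := (@grbr p L c).
Let hgr := grbr_lie_bracket L c.

(* [homog i x] with [x \in lcs L i] models [p ^ -i * x]: [rel] identifies [homog i v] with
   [p * homog i.+1 v], and the bracket of [Lhat] is [p * grbr], under which [homog i x] and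
   [homog j y] bracket to [p ^ -(i + j) * [x, y]]. *)
Definition filt_set : {set graded} := [set u : graded | [forall i : 'I_c, u i \in lcs L i]].

Lemma filtP (u : graded) : reflect (forall i : 'I_c, u i \in lcs L i) (u \in filt_set).
Proof. by rewrite inE; apply: forallP. Qed.

Lemma filt_group_set : @group_set (FinRing.Zmodule_to_finGroup _) filt_set.
Proof.
apply/group_setP; split=> [|u v /filtP uW /filtP vW]; apply/filtP => i.
  by rewrite ffunE group0r.
by rewrite ffunE groupD.
Qed.
Canonical filt := Group filt_group_set.

Lemma homog_filt n x : x \in lcs L n -> homog n x \in filt.
Proof. by move=> xn; apply/filtP => i; rewrite homogE; case: eqP => [-> // | _]; rewrite group0r. Qed.

Lemma homog0_filt x : homog 0 x \in filt.
Proof. by rewrite homog_filt ?inE. Qed.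

Lemma grbr_filt u v : u \in filt -> v \in filt -> grbr u v \in filt.
Proof.
move=> /filtP uW /filtP vW; apply/filtP => k; rewrite sum_ffunE group_sum // => i _.
by rewrite sum_ffunE group_sum // => j _; rewrite homogE; case: eqP => [-> | _];
  rewrite ?br_lcs ?group0r.
Qed.

Definition rel_gens : {set graded} :=
  [set homog i.+1 v *+ p - homog i v | i : 'I_c, v : L in lcs L i.+1].
Definition rel := <<(rel_gens : {set FinRing.Zmodule_to_finGroup _})>>%G.

Lemma rel_gen i v : v \in lcs L i.+1 -> homog i.+1 v *+ p - homog i v \in rel.
Proof.
move=> vi; have [lt_ic | le_ci] := ltnP i c.
  by apply/mem_gen/imset2P; exists (Ordinal lt_ic) v.
by rewrite !homog_out ?mul0rn ?subrr ?group0r // ltnW.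
Qed.

Lemma rel_ideal r w : r \in rel -> w \in filt -> grbr r w \in rel.
Proof.
move=> rR /filtP wW; move: r rR; apply: (additive_gen_in (H := setT%G)).
- by move=> x y _ _; rewrite (brBl hgr).
- exact: subsetT.
move=> _ /imset2P[i v _ vi ->]; rewrite (brBl hgr) (brMnl hgr) !grbr_homogl -sumrMnl -sumrB.
apply: group_sum => j _; rewrite addSn; apply: rel_gen.
by have := br_lcs vi (wW j); rewrite addSn.
Qed.

(* The preimage of [Omega1 Lhat] in [filt]. *)
Definition prel_set : {set graded} := [set u in filt | u *+ p \in rel].

Lemma prelE u : (u \in prel_set) = (u \in filt) && (u *+ p \in rel).
Proof. exact: in_set. Qed.

Lemma prel_group_set : @group_set (FinRing.Zmodule_to_finGroup _) prel_set.
Proof.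
apply/group_setP; split=> [|u v]; rewrite !prelE.
  by apply/andP; split; [exact: group0r | exact: groupMn (group0r rel)].
move=> /andP[uW upR] /andP[vW vpR]; apply/andP; split; first exact: groupD.
by rewrite zmodMgE mulrnDl groupD.
Qed.
Canonical prel := Group prel_group_set.

Lemma prel_ideal r w : r \in prel -> w \in filt -> grbr r w \in prel.
Proof.
rewrite !prelE => /andP[rW rpR] wW.
by rewrite grbr_filt //= -(brMnl hgr) rel_ideal.
Qed.

Lemma rel_prel r : r \in rel -> r \in filt -> r \in prel.
Proof. by move=> rR rW; rewrite prelE rW groupMn. Qed.

Lemma homog_chain i v : v \in lcs L i -> homog i v *+ p ^ i - homog 0 v \in rel.
Proof.
elim: i => [|i IH] vi; first by rewrite expn0 mulr1n subrr group0r.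
have -> : homog i.+1 v *+ p ^ i.+1 - homog 0 v =
    (homog i.+1 v *+ p - homog i v) *+ p ^ i + (homog i v *+ p ^ i - homog 0 v).
  by rewrite mulrnBl addrA subrK -mulrnA -expnS.
by rewrite groupD ?groupMn ?rel_gen // IH // (subsetP (lcs_subS L i)).
Qed.

Let pbr (u v : graded) := grbr u v *+ p.

Lemma pbr_filt : {in filt &, forall u v, pbr u v \in filt}.
Proof. by move=> u v uW vW; rewrite groupMn ?grbr_filt. Qed.

Lemma pbr_rel r w : r \in rel -> w \in filt -> pbr r w \in rel.
Proof. by move=> rR wW; rewrite groupMn ?rel_ideal. Qed.

Lemma pbr_prel r w : r \in prel -> w \in filt -> pbr r w \in prel.
Proof. by move=> rR wW; rewrite groupMn ?prel_ideal. Qed.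

Lemma pnat_card_graded : p.-nat #|graded|.
Proof. by rewrite card_ffun pnatX lie_pgroup. Qed.

Definition Lhat : ZpLie p :=
  subquot_lie (lie_bracketMn hgr p) pbr_filt pbr_rel pnat_card_graded.
Definition Lhat_mod : ZpLie p :=
  subquot_lie (lie_bracketMn hgr p) pbr_filt pbr_prel pnat_card_graded.

Local Notation cls := (sqclass filt rel).
Local Notation clsO := (sqclass filt prel).

Lemma Lhat_br u v : u \in filt -> v \in filt ->
  lie_br (cls u : Lhat) (cls v) = cls (grbr u v *+ p).
Proof. exact: (sq_br_class (lie_bracketMn hgr p) pbr_filt pbr_rel). Qed.

Lemma Lhat_mod_br u v : u \in filt -> v \in filt ->
  lie_br (clsO u : Lhat_mod) (clsO v) = clsO (grbr u v *+ p).
Proof. exact: (sq_br_class (lie_bracketMn hgr p) pbr_filt pbr_prel). Qed.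

Lemma Lhat_powerful : powerful Lhat.
Proof.
apply: zspan_min; first by apply: additive_group_set => x y; rewrite mulrnBl.
apply/subsetP => _ /imset2P[a b _ _ ->].
have [u uW ->] := sqclass_surj a; have [v vW ->] := sqclass_surj b.
by rewrite Lhat_br // sqclassMn ?grbr_filt //; apply: imset_f; rewrite inE.
Qed.

Lemma Lhat_pcentral : pcentral Lhat.
Proof.
apply/subsetP => a; rewrite !inE => /eqP pa; apply/forallP => b.
have [u uW au] := sqclass_surj a; have [v vW ->] := sqclass_surj b.
have upR : u *+ p \in rel by rewrite -(@sqclass_eq0 _ filt) ?groupMn // sqclassMn // -au pa eqxx.
by rewrite au Lhat_br // sqclass_eq0 ?pbr_filt // -(brMnl hgr) rel_ideal.
Qed.

Definition Lhat_proj (a : Lhat) : Lhat_mod := clsO (sq_val a).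

Lemma Lhat_proj_class u : u \in filt -> Lhat_proj (cls u) = clsO u.
Proof.
move=> uW; apply/eqP; rewrite sqclass_eqE ?sq_valW //.
by rewrite rel_prel ?sq_val_class ?groupB ?sq_valW.
Qed.

Lemma Lhat_proj_hom : lie_hom Lhat_proj.
Proof.
split=> a b; have [u uW ->] := sqclass_surj a; have [v vW ->] := sqclass_surj b.
  by rewrite -sqclassD // !Lhat_proj_class ?groupD // sqclassD.
by rewrite Lhat_br // !Lhat_proj_class ?pbr_filt // Lhat_mod_br.
Qed.

Lemma Lhat_proj_surj (y : Lhat_mod) : exists x : Lhat, Lhat_proj x = y.
Proof. by have [u uW ->] := sqclass_surj y; exists (cls u); rewrite Lhat_proj_class. Qed.

Lemma Lhat_proj_ker (x : Lhat) : Lhat_proj x = 0 <-> x \in Omega1 Lhat.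
Proof.
have [u uW ->] := sqclass_surj x; rewrite Lhat_proj_class // inE -sqclassMn //.
rewrite [_ == 0]sqclass_eq0; last exact: groupMn.
split=> [/eqP | upR]; last by apply/eqP; rewrite sqclass_eq0 // prelE uW.
by rewrite sqclass_eq0 // prelE => /andP[].
Qed.

Definition Lhat_embed (x : L) : Lhat_mod := clsO (homog 0 x).

Lemma Lhat_embedB : {morph Lhat_embed : x y / x - y}.
Proof. by move=> x y; rewrite /Lhat_embed homogB sqclassB ?homog0_filt. Qed.

Lemma Lhat_embed_hom : lie_hom Lhat_embed.
Proof.
split=> x y; first by rewrite /Lhat_embed homogD sqclassD ?homog0_filt.
rewrite /Lhat_embed Lhat_mod_br ?homog0_filt // grbr_homog add0n; apply/eqP.
have xyW : homog 1 (br x y) *+ p \in filt by rewrite groupMn ?homog_filt ?lcs_br ?inE.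
rewrite sqclass_eqE ?homog0_filt // rel_prel //.
  by rewrite -opprB groupN // rel_gen ?lcs_br ?inE.
by apply: groupB => //; exact: homog0_filt.
Qed.

Lemma Lhat_embedMn x n : Lhat_embed (x *+ n) = Lhat_embed x *+ n.
Proof. by rewrite /Lhat_embed homogMn sqclassMn ?homog0_filt. Qed.

Lemma homog_expn_Lhat_embed i x : (i <= c)%N -> x \in lcs L i ->
  clsO (homog i x) *+ p ^ c = Lhat_embed (x *+ p ^ (c - i)).
Proof.
move=> le_ic xi; have -> : (p ^ c = p ^ i * p ^ (c - i))%N by rewrite -expnD subnKC.
rewrite mulrnA Lhat_embedMn -sqclassMn ?homog_filt //; congr (_ *+ _); apply/eqP.
have xiW : homog i x *+ p ^ i \in filt by rewrite groupMn ?homog_filt.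
by rewrite sqclass_eqE ?homog0_filt // rel_prel ?homog_chain // groupB ?homog0_filt.
Qed.

(* Clearing denominators: [p ^ -i * x] is sent to [p ^ (c - 1 - i) * x]. *)
Definition grade_eval (u : graded) : L := \sum_(i < c) u i *+ p ^ (c.-1 - i).

Lemma grade_evalB : {morph grade_eval : u v / u - v}.
Proof. by move=> u v; rewrite /grade_eval -sumrB; apply: eq_bigr => i _; rewrite !ffunE mulrnBl. Qed.

Lemma grade_evalMn u n : grade_eval (u *+ n) = grade_eval u *+ n.
Proof.
by rewrite /grade_eval -sumrMnl; apply: eq_bigr => i _; rewrite ffunMnE mulrnAC.
Qed.

Lemma grade_eval_homog n x : grade_eval (homog n x) = if (n < c)%N then x *+ p ^ (c.-1 - n) else 0.
Proof.
rewrite /grade_eval -(@sum_ord_eq _ c n (fun i => x *+ p ^ (c.-1 - i))).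
by apply: eq_bigr => i _; rewrite homogE; case: eqP; rewrite ?mul0rn.
Qed.

Hypothesis lcs_c : lcs L c = [set 0].

Lemma grade_eval_rel r : r \in rel -> grade_eval r = 0.
Proof.
move=> rR; apply/eqP; rewrite -in_set1 -lcs_c; move: r rR.
apply: (additive_gen_in (H := setT%G)) => [u v _ _||_ /imset2P[i v _ vi ->]].
- exact: grade_evalB.
- exact: subsetT.
rewrite grade_evalB grade_evalMn !grade_eval_homog ltn_ord.
have [lt_ic | le_ci] := ltnP i.+1 c.
  by rewrite -mulrnA -expnSr subnSK ?subrr ?group0r // ltn_predRL.
by rewrite mul0rn sub0r groupN // groupMn // (subsetP (lcs_sub L le_ci)).
Qed.

Lemma Lhat_embed_ker x : Lhat_embed x = 0 -> x *+ p ^ c = 0.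
Proof.
move/eqP; rewrite sqclass_eq0 ?homog0_filt // prelE => /andP[_ /grade_eval_rel].
rewrite grade_evalMn grade_eval_homog; case: posnP => [c0 _ | c_gt0].
  have : x \in lcs L c by rewrite c0 inE.
  by rewrite lcs_c inE => /eqP ->; rewrite mul0rn.
by rewrite subn0 -mulrnA -expnSr prednK.
Qed.

End LieHat.

Section Bounds.
Variables (p : nat) (L : ZpLie p) (c d : nat) (S : seq L).
Hypotheses (p_pr : prime p) (Sd : (size S <= d)%N) (S_gen : lie_gen [set x in S] = [set: L])
  (lcs_c : lcs L c = [set 0]).
Local Notation N := (monomial_count d c).

Let pc_gt0 : (0 < p ^ c)%N.
Proof. by rewrite expn_gt0 prime_gt0. Qed.

Definition filt_gen_index : {set 'I_c * L} := [set ix : 'I_c * L | ix.2 \in monomials_from S c ix.1].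

Definition filt_gens (X : {group _}) : {set FinRing.Zmodule_to_finGroup _} :=
  [set sqclass (filt L c) X (homog c ix.1 ix.2) | ix : 'I_c * L in filt_gen_index].

Lemma span_filt_gens X : <<filt_gens X>>%g = [set: subquot (filt L c) X].
Proof.
apply/eqP; rewrite eqEsubset subsetT /=; apply/subsetP => a _.
have [u /filtP uW ->] := sqclass_surj a.
rewrite (graded_decomp u) sqclass_sum => [|i]; last exact: homog_filt.
apply: group_sum => i _.
apply: (additive_gen_in (f := fun x => sqclass (filt L c) X (homog c i x)) (H := lcs_group L i)
  (A := monomials_from S c i)).
- by move=> x y xi yi; rewrite homogB sqclassB ?homog_filt.
- exact: monomials_from_lcs.
- by move=> x xM; apply: mem_gen; apply/imsetP; exists (i, x); rewrite // inE.
exact: subsetP (lcs_sub_monomials lcs_c S_gen i) _ (uW i).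
Qed.

Lemma card_filt_gens X : (#|filt_gens X| <= c * N)%N.
Proof.
have sIM : filt_gen_index \subset setX [set: 'I_c] (monomials_from S c 0).
  apply/subsetP => -[i x]; rewrite in_set in_setX in_setT /= => xM.
  exact: subsetP (monomials_from_sub S c (leq0n i)) _ xM.
rewrite (leq_trans (leq_imset_card _ _)) // (leq_trans (subset_leq_card sIM)) //.
rewrite cardsX cardsT card_ord leq_mul2l (leq_trans (card_monomials_from S c 0)) ?orbT //.
exact: size_lie_monomials.
Qed.

Lemma Lhat_gen : d_generated (Lhat L c) (c * N).
Proof.
exists (enum (filt_gens (rel L c))); split; first by rewrite -cardE card_filt_gens.
by apply: lie_gen_full; rewrite set_enum span_filt_gens.
Qed.

Lemma card_Lhat_mod : (#|Lhat_mod L c| <= #|Lhat_embed c @: [set: L]| * (p ^ c) ^ (c * N))%N.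
Proof.
pose B := Group (additive_group_set [set: L]%G (@Lhat_embedB p L c)).
have gensB : {in enum (filt_gens (prel L c)), forall a, a *+ p ^ c \in B}.
  move=> a; rewrite mem_enum => /imsetP[[i x]]; rewrite in_set /= => xM ->.
  rewrite homog_expn_Lhat_embed ?(ltnW (ltn_ord i)) ?(subsetP (monomials_from_lcs S c i)) //.
  exact: imset_f (in_setT _).
rewrite -cardsT -(span_filt_gens (prel L c)).
have sGB : filt_gens (prel L c) \subset B :|: [set a in enum (filt_gens (prel L c))].
  by rewrite set_enum subsetUr.
apply: leq_trans (subset_leq_card (genS sGB)) _.
apply: leq_trans (leq_card_gen_adjoin pc_gt0 gensB) _.
have := card_filt_gens (prel L c); rewrite cardE => size_gens.
by rewrite leq_mul2l leq_pexp2l ?size_gens ?orbT.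
Qed.

Lemma card_expn_ker : (#|[set x : L | (x *+ p ^ c == 0)%R]| <= (p ^ c) ^ N)%N.
Proof.
have pL : (p.-group [set: L])%g by rewrite /pgroup cardsT lie_pgroup.
have cL := zmod_abelian [set: L].
have MhoS : {in enum (monomials_from S c 0), forall x, x *+ p ^ c \in 'Mho^c([set: L])%g}.
  by move=> x _; rewrite (MhoEabelian _ pL cL); apply: imset_f; rewrite inE.
have sMM : monomials_from S c 0 \subset
    'Mho^c([set: L])%g :|: [set x in enum (monomials_from S c 0)] by rewrite set_enum subsetUr.
have size_M : (size (enum (monomials_from S c 0)) <= N)%N.
  by rewrite -cardE (leq_trans (card_monomials_from S c 0)) ?size_lie_monomials.
have card_L : (#|[set: L]| <= #|'Mho^c([set: L])%g| * (p ^ c) ^ N)%N.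
  rewrite -{1}(span_monomials lcs_c S_gen) (leq_trans (subset_leq_card (genS sMM))) //.
  by rewrite (leq_trans (leq_card_gen_adjoin pc_gt0 MhoS)) // leq_mul // leq_pexp2l.
have -> : [set x : L | (x *+ p ^ c == 0)%R] = 'Ohm_c([set: L])%g.
  by rewrite (OhmEabelian pL (zmod_abelian _)); apply/setP => x; rewrite !inE.
rewrite -(leq_pmul2r (cardG_gt0 'Mho^c([set: L])%G)) mul_card_Ohm_Mho_abelian // mulnC.
exact: card_L.
Qed.

Lemma card_Lhat_embed_ker : (#|[set x : L | (Lhat_embed c x == 0)%R]| <= (p ^ c) ^ N)%N.
Proof.
apply: leq_trans card_expn_ker; apply/subset_leq_card/subsetP => x.
by rewrite !inE => /eqP /(Lhat_embed_ker lcs_c) ->.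
Qed.

Lemma index_Lhat_embed :
  (#|Lhat_mod L c| %/ #|Lhat_embed c @: [set: L]| <= (p ^ c) ^ (c * N))%N.
Proof.
have im_gt0 : (0 < #|Lhat_embed c @: [set: L]|)%N.
  by apply/card_gt0P; exists (Lhat_embed c 0); rewrite imset_f ?inE.
by rewrite (leq_trans (leq_div2r _ card_Lhat_mod)) // mulnC mulnK.
Qed.

End Bounds.

Theorem theorem3p6 :
  exists (g : nat -> nat -> nat) (f : nat -> nat -> nat -> nat),
  forall (p : nat), prime p ->
  forall (L : ZpLie p) (d c : nat),
    d_generated L d -> nil_class L c ->
    exists (Lh : ZpLie p) (J : {set L}),
      [/\ powerful Lh, pcentral Lh, d_generated Lh (g d c),
          lie_ideal J & (#|J| <= f p c d)%N] /\
      (* Q together with pi is (a copy of) Lh / Omega_1(Lh); iota is an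
         embedding of L/J into it, i.e. a homomorphism L -> Q with kernel J *)
      exists (Q : ZpLie p) (pi : Lh -> Q) (iota : L -> Q),
        [/\ lie_hom pi, (forall y : Q, exists x : Lh, pi x = y)
           & (forall x : Lh, pi x = 0 <-> x \in Omega1 Lh)] /\
        [/\ lie_hom iota, (forall x : L, iota x = 0 <-> x \in J)
           & (#|Q| %/ #|iota @: [set: L]| <= f p c d)%N].
Proof.
pose N d c := monomial_count d c.
exists (fun d c => c * N d c)%N, (fun p c d => (p ^ c) ^ (c * N d c + N d c))%N.
move=> p p_pr L d c [S [Sd S_gen]] [lcs_c _].
have pc_gt0 : (0 < p ^ c)%N by rewrite expn_gt0 prime_gt0.
exists (Lhat L c), [set x | Lhat_embed c x == 0]; split.
  split; [exact: Lhat_powerful | exact: Lhat_pcentral | exact: Lhat_gen Sd S_gen lcs_c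
         | exact: lie_hom_ker_ideal (Lhat_embed_hom L c) | ].
  by rewrite (leq_trans (card_Lhat_embed_ker p_pr Sd S_gen lcs_c)) ?leq_pexp2l ?leq_addl.
exists (Lhat_mod L c), (@Lhat_proj p L c), (Lhat_embed c); split; split.
- exact: Lhat_proj_hom.
- exact: Lhat_proj_surj.
- exact: Lhat_proj_ker.
- exact: Lhat_embed_hom.
- by move=> x; rewrite inE; split=> /eqP.
by rewrite (leq_trans (index_Lhat_embed p_pr Sd S_gen lcs_c)) ?leq_pexp2l ?leq_addr.
Qed.
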